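(* Let $n>3$ be an integer and let $L(n)$ be the graph defined in the context below. Then $L(n)$ is a vertex-transitive integral graph, and the set of distinct eigenvalues of $L(n)$ is exactly $\{-2,-1,0,n-2,n-1\}$.
   Context: Let $[n]=\{1,2,\dots,n\}$. Let $H(n)$ be the graph whose vertex set is $\{v : v\subseteq [n],\ |v|\in\{1,2\}\}$, where two vertices $v,w$ are adjacent if and only if $v\subset w$ or $w\subset v$ (equivalently, $H(n)$ is the subgraph of the hypercube $Q_n$ induced by the vertices of weight $1$ and $2$). Let $L(n)$ be the line graph of $H(n)$: its vertices are the edges $\{\{i\},\{i,j\}\}$ of $H(n)$ (with $i\neq j$ in $[n]$), denoted $[i,ij]$, and two such vertices are adjacent iff, as edges of $H(n)$, they share exactly one endpoint. The eigenvalues of a graph are the eigenvalues of its adjacency matrix; a graph is integral if all its eigenvalues are integers; a graph is vertex-transitive if its automorphism group acts transitively on its vertex set. *)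

From HB Require Import structures.
From mathcomp Require Import all_boot all_order all_fingroup all_algebra all_field.
Set Implicit Arguments. Unset Strict Implicit. Unset Printing Implicit Defensive.
Import Order.TTheory GRing.Theory Num.Theory.

(* Vertices of H(n): subsets of [n] (here 'I_n) of size 1 or 2.
   Edges of H(n) are pairs {{i},{i,j}} with i <> j.  A vertex [i,ij] of L(n)
   is encoded by the ordered pair (i,j) with i != j. *)
Definition Lvert (n : nat) := {p : 'I_n * 'I_n | p.1 != p.2}.

Definition Hedge (n : nat) (v : Lvert n) : {set {set 'I_n}} :=
  [set [set (val v).1]; [set (val v).1; (val v).2]].

Definition Ladj (n : nat) : rel (Lvert n) :=
  fun v w => #|Hedge v :&: Hedge w| == 1%N.

Definition adjmx (T : finType) (e : rel T) : 'M[algC]_#|T| :=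
  \matrix_(i, j) ((e (enum_val i) (enum_val j))%:R)%R.

Definition graph_eigenvalue (T : finType) (e : rel T) (a : algC) : Prop :=
  eigenvalue (adjmx e) a.

Definition integral_graph (T : finType) (e : rel T) : Prop :=
  forall a, graph_eigenvalue e a -> a \is a Num.int.

Definition graph_aut (T : finType) (e : rel T) (f : {perm T}) : Prop :=
  forall x y, e (f x) (f y) = e x y.

Definition vertex_transitive (T : finType) (e : rel T) : Prop :=
  forall u v : T, exists f : {perm T}, graph_aut e f /\ f u = v.

From HB Require Import structures.
From mathcomp Require Import all_boot all_order all_fingroup all_algebra all_field.
From mathcomp Require Import ring.
Set Implicit Arguments.
Unset Strict Implicit.
Unset Printing Implicit Defensive.

Import Order.TTheory GRing.Theory Num.Theory.
Local Open Scope ring_scope.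

(* An eigenvector of L(n) is a function f on ordered pairs (i, j), i <> j, and
   the eigen-equation reads (a + 1) f(i,j) = S_i + f(j,i), where S_i is the sum
   of the i-th row of f.  Using it at (i,j) and (j,i) gives
   a (a + 2) f(i,j) = (a + 1) S_i + S_j, while summing it over rows and columns
   yields (a + 1 - n)(a + 1)(a + 2 - n) S_i = 0; hence a is a root of
   a (a + 1) (a + 2) (a + 2 - n) (a + 1 - n).  Conversely, for n >= 4 two
   disjointly supported zero-sum vectors u, w give explicit eigenfunctions
   (u_i w_j - w_i u_j, u_j, u_i w_j + w_i u_j, (n - 1) u_i + u_j and 1) for the
   five roots.  Vertex transitivity comes from Sym(n) acting on ordered pairs. *)

Lemma card_set2I (T : finType) (a b : T) (B : {set T}) : a != b ->
  #|[set a; b] :&: B| = ((a \in B) + (b \in B))%N.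
Proof.
move=> ab; transitivity #|[seq x <- [:: a; b] | x \in B]|.
  by apply: eq_card => x; rewrite !inE mem_filter !inE andbC.
have U : uniq [seq x <- [:: a; b] | x \in B].
  by rewrite filter_uniq //= inE ab.
by move/card_uniqP: U => ->; rewrite size_filter /= addn0.
Qed.

Lemma set1_eq_set2 (T : finType) (i k l : T) :
  k != l -> ([set i] == [set k; l]) = false.
Proof.
move=> kl; apply: contraNF kl => /eqP E.
by have := cards2 k l; rewrite -E cards1; case: eqP.
Qed.

Lemma set2_eq_set2 (T : finType) (i j k l : T) : i != j -> k != l ->
  ([set i; j] == [set k; l]) = ((i == k) && (j == l)) || ((i == l) && (j == k)).
Proof.
move=> ij kl; apply/idP/idP; last first.
  by case/orP=> /andP[/eqP-> /eqP->]; rewrite // setUC.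
move/eqP/setP=> E; move: (esym (E i)) (esym (E j)) (E k).
rewrite !inE !eqxx ?orbT /=.
by do 3![case/orP=> /eqP ?]; subst; rewrite ?eqxx ?orbT // in ij kl *.
Qed.

Lemma LadjE n (v w : Lvert n) : Ladj v w =
  ((val v).1 == (val w).1) && ((val v).2 != (val w).2) ||
  ((val v).1 == (val w).2) && ((val v).2 == (val w).1).
Proof.
case: v w => [[i j] /= ij] [[k l] /= kl].
rewrite /Ladj /Hedge /= card_set2I ?set1_eq_set2 // !inE set2_eq_set2 //.
rewrite (inj_eq set1_inj) [[set i; j] == _]eq_sym !set1_eq_set2 //=.
case: (eqVneq i k) kl => [<- il|_ _] /=; last by case: (_ && _).
by rewrite (negbTE il); case: (j == l).
Qed.

Lemma perm_pair_transitive (T : finType) (a b c d : T) : a != b -> c != d ->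
  exists s : {perm T}, s a = c /\ s b = d.
Proof.
move=> ab cd; pose s1 := tperm a c.
have s1a : s1 a = c by rewrite tpermL.
have s1b_c : s1 b != c by rewrite -s1a (inj_eq perm_inj) eq_sym.
exists (s1 * tperm (s1 b) d)%g; rewrite !permM s1a tpermL.
by rewrite tpermD // eq_sym.
Qed.

Section PairAction.

Variable n : nat.

Lemma perm_Lvert_subproof (s : {perm 'I_n}) (x : Lvert n) :
  s (val x).1 != s (val x).2.
Proof. by rewrite (inj_eq perm_inj); exact: valP x. Qed.

Definition perm_Lvert_fun (s : {perm 'I_n}) (x : Lvert n) : Lvert n :=
  exist _ (s (val x).1, s (val x).2) (perm_Lvert_subproof s x).

Lemma perm_Lvert_fun_inj s : injective (perm_Lvert_fun s).
Proof.
move=> x y /(congr1 val) [/perm_inj x1y1 /perm_inj x2y2].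
exact/val_inj/injective_projections.
Qed.

Definition perm_Lvert s : {perm Lvert n} := perm (@perm_Lvert_fun_inj s).

Lemma perm_Lvert_aut s : graph_aut (@Ladj n) (perm_Lvert s).
Proof. by move=> x y; rewrite !permE !LadjE /= !(inj_eq perm_inj). Qed.

Lemma Ladj_vertex_transitive : vertex_transitive (@Ladj n).
Proof.
move=> [[a b] ab] [[c d] cd].
have [s [sa sb]] := perm_pair_transitive ab cd.
exists (perm_Lvert s); split; first exact: perm_Lvert_aut.
by apply: val_inj; rewrite permE /= sa sb.
Qed.

End PairAction.

Lemma sumr_predC1 (R : zmodType) (I : finType) (i : I) (F : I -> R) :
  \sum_(j | j != i) F j = \sum_j F j - F i.
Proof. by rewrite [X in _ = X - _](bigD1 i) //= addrAC subrr add0r. Qed.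

Lemma mul_adjmx (T : finType) (e : rel T) (v : 'rV[algC]_#|T|) (y : T) :
  (v *m adjmx e) 0 (enum_rank y) = \sum_(x | e x y) v 0 (enum_rank x).
Proof.
rewrite mxE (reindex enum_rank) /=; last exact/onW_bij/enum_rank_bij.
rewrite [RHS]big_mkcond; apply: eq_bigr => x _; rewrite mxE !enum_rankK.
by case: (e x y); rewrite ?mulr1 ?mulr0.
Qed.

Lemma sum_Lvert (R : nmodType) n (P : 'I_n -> 'I_n -> bool)
    (F : 'I_n -> 'I_n -> R) :
  \sum_(x : Lvert n | P (val x).1 (val x).2) F (val x).1 (val x).2 =
  \sum_i \sum_(j | (i != j) && P i j) F i j.
Proof.
rewrite pair_big_dep (reindex_omap (val : Lvert n -> _) insub) /=; last first.
  by move=> p /andP[p12 _]; rewrite insubT.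
by apply: eq_bigl => x; rewrite valK eqxx andbT (valP x).
Qed.

Lemma sum_Ladj n (F : 'I_n -> 'I_n -> algC) (y : Lvert n) :
  \sum_(x | Ladj x y) F (val x).1 (val x).2 =
  \sum_(k | (k != (val y).1) && (k != (val y).2)) F (val y).1 k
  + F (val y).2 (val y).1.
Proof.
case: y => [[i j] /= ij]; under eq_bigl => x do rewrite LadjE /=.
rewrite (sum_Lvert (fun p q => (p == i) && (q != j) || (p == j) && (q == i))) /=.
rewrite (bigD1 i) //= [X in _ + X](bigD1 j) 1?eq_sym //=.
rewrite [X in _ + (_ + X)]big1 ?addr0 => [|p /andP[/negbTE-> /negbTE->]]; last first.
  by rewrite big_pred0 // => q; rewrite !andbF.
congr (_ + _).
  by apply: eq_bigl => q; rewrite eqxx [j == i]eq_sym (negbTE ij) orbF eq_sym.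
apply: big_pred1 => q /=; rewrite eqxx [j == i]eq_sym (negbTE ij) /=.
by apply/andb_idl => /eqP->; rewrite eq_sym.
Qed.

Definition Ladj_eigenfun n (a : algC) (f : 'I_n -> 'I_n -> algC) : Prop :=
  forall i j, i != j -> \sum_(k | (k != i) && (k != j)) f i k + f j i = a * f i j.

Lemma Ladj_eigenvalueP n a : graph_eigenvalue (@Ladj n) a <->
  exists f : 'I_n -> 'I_n -> algC,
    Ladj_eigenfun a f /\ exists i j, i != j /\ f i j != 0.
Proof.
split.
  case/eigenvalueP => v v_eigen v_neq0.
  pose f i j := if insub (i, j) is Some x then v 0 (enum_rank x) else 0.
  have fE (x : Lvert n) : f (val x).1 (val x).2 = v 0 (enum_rank x).
    by rewrite /f -surjective_pairing valK.
  exists f; split.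
    move=> i j ij; pose y : Lvert n := exist _ (i, j) ij.
    move/rowP/(_ (enum_rank y)): (v_eigen); rewrite mul_adjmx mxE -(fE y) => <-.
    by rewrite -(sum_Ladj f y); apply: eq_bigr => x _; rewrite fE.
  have /existsP[k vk] : [exists k, v 0 k != 0].
    apply: contraNT v_neq0 => /existsPn v0; apply/eqP/rowP => k.
    by rewrite mxE; exact/eqP/negbNE/v0.
  exists (val (enum_val k)).1, (val (enum_val k)).2.
  by rewrite fE enum_valK (valP (enum_val k)).
case=> f [f_eigen [i [j [ij fij]]]]; apply/eigenvalueP.
exists (\row_k f (val (enum_val k)).1 (val (enum_val k)).2).
  apply/rowP => k; rewrite -[k]enum_valK mul_adjmx !mxE enum_valK.
  rewrite -f_eigen ?(valP (enum_val k)) // -sum_Ladj.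
  by apply: eq_bigr => x _; rewrite mxE enum_rankK.
apply: contra_neq fij => /rowP/(_ (enum_rank (exist _ (i, j) ij : Lvert n))).
by rewrite !mxE enum_rankK.
Qed.

Section EigenfunAnnihilator.

Variables (n : nat) (a : algC) (f : 'I_n -> 'I_n -> algC).
Hypothesis f_eigen : Ladj_eigenfun a f.

Let S i := \sum_(k | k != i) f i k.
Let T j := \sum_(k | k != j) f k j.

Lemma eigenfun_shift i j : i != j -> (a + 1) * f i j = S i + f j i.
Proof. by move=> ij; rewrite /S (bigD1 j) 1?eq_sym //= -addrA f_eigen //; ring. Qed.

Lemma col_sumE i : T i = (a + 2 - n%:R) * S i.
Proof.
have : \sum_(j | j != i) (a + 1) * f i j = \sum_(j | j != i) (S i + f j i).
  by apply: eq_bigr => j ji; rewrite eigenfun_shift // eq_sym.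
rewrite -mulr_sumr -/(S i) big_split /= -/(T i) sumr_predC1 sumr_const card_ord.
move=> sumE; have -> : T i = (a + 1) * S i - (S i *+ n - S i).
  by rewrite sumE [_ + T i]addrC addrK.
ring.
Qed.

Lemma col_sum_total j : (a + 1) * T j = \sum_i S i.
Proof.
have : \sum_(i | i != j) (a + 1) * f i j = \sum_(i | i != j) (S i + f j i).
  by apply: eq_bigr => i; exact: eigenfun_shift.
by rewrite -mulr_sumr -/(T j) big_split /= -/(S j) sumr_predC1 subrK.
Qed.

Lemma total_sum_annih : (a + 1 - n%:R) * \sum_i S i = 0.
Proof.
have sumT : \sum_j T j = \sum_i S i.
  rewrite (exchange_big_dep xpredT) //=.
  by apply: eq_bigr => i _; apply: eq_bigl => j; rewrite eq_sym.
rewrite mulrBl -{1}sumT mulr_sumr.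
under eq_bigr do rewrite col_sum_total.
by rewrite sumr_const card_ord mulr_natl subrr.
Qed.

Lemma row_sum_annih i : (a + 1 - n%:R) * (a + 1) * (a + 2 - n%:R) * S i = 0.
Proof. by rewrite -!mulrA -col_sumE col_sum_total total_sum_annih. Qed.

Lemma eigenfun_annih i j : i != j ->
  \prod_(r <- [:: -2; -1; 0; n%:R - 2; n%:R - 1]) (a - r) * f i j = 0.
Proof.
move=> ij; have swap : a * (a + 2) * f i j = (a + 1) * S i + S j.
  transitivity ((a + 1) * ((a + 1) * f i j) - f i j); first ring.
  by rewrite eigenfun_shift // mulrDr eigenfun_shift 1?eq_sym //; ring.
transitivity ((a + 1 - n%:R) * (a + 1) * (a + 2 - n%:R) * (a * (a + 2) * f i j)).
  by rewrite !big_cons big_nil; ring.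
by rewrite swap mulrDr mulrCA !row_sum_annih mulr0 addr0.
Qed.

End EigenfunAnnihilator.

Lemma Ladj_eigenvalue_mem n a : graph_eigenvalue (@Ladj n) a ->
  a \in [:: -2; -1; 0; n%:R - 2; n%:R - 1].
Proof.
case/Ladj_eigenvalueP => f [f_eigen [i [j [ij fij]]]].
have /eqP := eigenfun_annih f_eigen ij; rewrite mulf_eq0 (negbTE fij) orbF.
by rewrite prodf_seq_eq0 => /hasP[r r_in]; rewrite subr_eq0 => /eqP->.
Qed.

Lemma Ladj_eigenvalue_witness n (a : algC) (f : 'I_n -> 'I_n -> algC) i j :
  i != j -> f i j != 0 ->
  (forall i j, i != j -> \sum_k f i k - f i i - f i j + f j i = a * f i j) ->
  graph_eigenvalue (@Ladj n) a.
Proof.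
move=> ij fij f_eigen; apply/Ladj_eigenvalueP; exists f; split; last by exists i, j.
move=> k l kl; rewrite -f_eigen // [\sum_m _](bigD1 k) //=.
by rewrite [\sum_(m | m != k) _](bigD1 l) 1?eq_sym //=; ring.
Qed.

Section Witnesses.

Variables (n : nat) (u w : 'I_n -> algC) (i0 i2 : 'I_n).
Hypotheses (u_sum0 : \sum_k u k = 0) (w_sum0 : \sum_k w k = 0).
Hypotheses (uw0 : forall k, u k * w k = 0) (u_i0 : u i0 != 0) (w_i2 : w i2 != 0).

Let w_i0 : w i0 = 0.
Proof. by apply/eqP; have /eqP := uw0 i0; rewrite mulf_eq0 (negbTE u_i0). Qed.

Let u_i2 : u i2 = 0.
Proof. by apply/eqP; have /eqP := uw0 i2; rewrite mulf_eq0 (negbTE w_i2) orbF. Qed.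

Let i0_neq_i2 : i0 != i2.
Proof. by apply: contra_neq u_i0 => ->; rewrite u_i2. Qed.

Lemma Ladj_eigenvalue_m2 : graph_eigenvalue (@Ladj n) (-2).
Proof.
pose f i j : algC := u i * w j - w i * u j.
apply: (@Ladj_eigenvalue_witness _ _ f i0 i2 i0_neq_i2).
  by rewrite /f w_i0 u_i2 mul0r subr0 mulf_neq0.
by move=> i j _; rewrite /f sumrB -!mulr_sumr u_sum0 w_sum0 !mulr0; ring.
Qed.

Lemma Ladj_eigenvalue_m1 : graph_eigenvalue (@Ladj n) (-1).
Proof.
apply: (@Ladj_eigenvalue_witness _ _ (fun _ j => u j) i2 i0 _ u_i0).
  by rewrite eq_sym i0_neq_i2.
by move=> i j _; rewrite u_sum0; ring.
Qed.

Lemma Ladj_eigenvalue_0 : graph_eigenvalue (@Ladj n) 0.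
Proof.
pose f i j : algC := u i * w j + w i * u j.
apply: (@Ladj_eigenvalue_witness _ _ f i0 i2 i0_neq_i2).
  by rewrite /f w_i0 u_i2 mul0r addr0 mulf_neq0.
move=> i j _; rewrite /f big_split /= -!mulr_sumr u_sum0 w_sum0.
by rewrite [w i * u i]mulrC uw0; ring.
Qed.

Lemma Ladj_eigenvalue_n2 : graph_eigenvalue (@Ladj n) (n%:R - 2).
Proof.
pose f i j : algC := (n%:R - 1) * u i + u j.
apply: (@Ladj_eigenvalue_witness _ _ f i2 i0).
- by rewrite eq_sym i0_neq_i2.
- by rewrite /f u_i2 mulr0 add0r.
- move=> i j _; rewrite /f big_split /= u_sum0 sumr_const card_ord.
  by rewrite -mulr_natl; ring.
Qed.

Lemma Ladj_eigenvalue_n1 : graph_eigenvalue (@Ladj n) (n%:R - 1).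
Proof.
apply: (@Ladj_eigenvalue_witness _ _ (fun _ _ => 1) i0 i2 i0_neq_i2 (oner_neq0 _)).
by move=> i j _; rewrite sumr_const card_ord -mulr_natl; ring.
Qed.

End Witnesses.

Lemma Ladj_spectrum n : (3 < n)%N -> forall a, graph_eigenvalue (@Ladj n) a <->
  a \in [:: -2; -1; 0; n%:R - 2; n%:R - 1].
Proof.
move=> n_gt3 a; split; first exact: Ladj_eigenvalue_mem.
pose i0 := @Ordinal n 0 (ltnW (ltnW (ltnW n_gt3))).
pose i1 := @Ordinal n 1 (ltnW (ltnW n_gt3)).
pose i2 := @Ordinal n 2 (ltnW n_gt3).
pose i3 := @Ordinal n 3 n_gt3.
pose e (c k : 'I_n) : algC := (k == c)%:R.
have sum_e c : \sum_k e c k = 1.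
  by rewrite (bigD1 c) //= /e eqxx big1 ?addr0 // => k /negbTE->.
pose u k := e i0 k - e i1 k; pose w k := e i2 k - e i3 k.
have u_sum0 : \sum_k u k = 0 by rewrite sumrB !sum_e subrr.
have w_sum0 : \sum_k w k = 0 by rewrite sumrB !sum_e subrr.
have uw0 k : u k * w k = 0.
  by case: k => [[|[|[|[|m]]]] ?]; rewrite /u /w /e -!val_eqE /= ?subrr ?mulr0 ?mul0r.
have u_i0 : u i0 != 0 by rewrite /u /e -!val_eqE /= subr0 oner_neq0.
have w_i2 : w i2 != 0 by rewrite /w /e -!val_eqE /= subr0 oner_neq0.
rewrite !inE => /orP[|/orP[|/orP[|/orP[]]]] /eqP->.
- exact: Ladj_eigenvalue_m2 u_sum0 w_sum0 uw0 u_i0 w_i2.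
- exact: Ladj_eigenvalue_m1 u_sum0 uw0 u_i0 w_i2.
- exact: Ladj_eigenvalue_0 u_sum0 w_sum0 uw0 u_i0 w_i2.
- exact: Ladj_eigenvalue_n2 u_sum0 uw0 u_i0 w_i2.
- exact: Ladj_eigenvalue_n1 uw0 u_i0 w_i2.
Qed.

Theorem theorem3p4 (n : nat) (hn : (3 < n)%N) :
  vertex_transitive (@Ladj n) /\ integral_graph (@Ladj n) /\
  (forall a : algC, graph_eigenvalue (@Ladj n) a <->
     a \in [:: -2; -1; 0; n%:R - 2; n%:R - 1]).
Proof.
split; first exact: Ladj_vertex_transitive.
split; last exact: Ladj_spectrum.
move=> a /(Ladj_spectrum hn); rewrite !inE.
case/orP=> [|/orP[|/orP[|/orP[]]]] /eqP->;
  by rewrite ?rpredN ?rpredB ?rpred_nat ?rpred0 ?rpred1.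
Qed.
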